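(* Let $q$ be a prime power, $u,v$ non-zero in $\mathbb{F}_q$, and write $\mathrm{Rad}(q-1)=k\,p_1\cdots p_s$ with $k$ a divisor and $p_1,\ldots,p_s$ distinct primes. Let $N_{q-1}=N(q-1,q-1,q-1,q-1)$ and $N_{k,q-1}=N(k,k,k,q-1)$. Then $$N_{q-1}\geq \sum_{i=1}^s\{N(p_ik,k,k,q-1)+N(k,p_ik,k,q-1)+N(k,k,p_ik,q-1)\}-(3s-1)N_{k,q-1}.$$ Hence, with $\delta_3=1-3\sum_{i=1}^s 1/p_i$, $$N_{q-1}\geq \sum_{i=1}^s\{[N(p_ik,k,k,q-1)-\theta(p_i)N_{k,q-1}]+[N(k,p_ik,k,q-1)-\theta(p_i)N_{k,q-1}]+[N(k,k,p_ik,q-1)-\theta(p_i)N_{k,q-1}]\}+\delta_3N_{k,q-1}.$$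
   Context: $\mathrm{Rad}(m)$ is the product of the distinct primes dividing $m$; $\theta(m)=\phi(m)/m$. For a divisor $e$ of $q-1$, a non-zero $a\in\mathbb{F}_q$ is $e$-free if $a=b^d$ with $b\in\mathbb{F}_q$, $d\mid e$ implies $d=1$. For divisors $e_1,\ldots,e_4$ of $q-1$, $N(e_1,e_2,e_3,e_4)$ is the number of pairs of non-zero $a,b\in\mathbb{F}_q$ such that $a$, $b$, $ua+vb$, $va^{-1}+ub^{-1}$ are (non-zero and) respectively $e_1$-, $e_2$-, $e_3$-, $e_4$-free. *)

From HB Require Import structures.
From mathcomp Require Import all_boot all_order all_algebra all_field.
From mathcomp Require Import boolp.
Set Implicit Arguments. Unset Strict Implicit. Unset Printing Implicit Defensive.
Import Order.TTheory GRing.Theory Num.Theory.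
Local Open Scope ring_scope.

Definition Rad (m : nat) : nat := (\prod_(p <- primes m) p)%N.

Definition theta (m : nat) : rat := (totient m)%:R / m%:R.

Definition efree (F : finFieldType) (e : nat) (a : F) : Prop :=
  a != 0 /\ forall (d : nat) (b : F), (d %| e)%N -> a = b ^+ d -> d = 1%N.

Definition Ncount (F : finFieldType) (u v : F) (e1 e2 e3 e4 : nat) : nat :=
  #|[set ab : F * F | [&& ab.1 != 0, ab.2 != 0,
      `[< efree e1 ab.1 >], `[< efree e2 ab.2 >],
      `[< efree e3 (u * ab.1 + v * ab.2) >] &
      `[< efree e4 (v * ab.1^-1 + u * ab.2^-1) >] ] ]|.

From HB Require Import structures.
From mathcomp Require Import all_boot all_order all_algebra all_field.
From mathcomp Require Import boolp zify ring lra.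
Set Implicit Arguments. Unset Strict Implicit. Unset Printing Implicit Defensive.
Import Order.TTheory GRing.Theory Num.Theory.
Local Open Scope ring_scope.

(* Let B be the set of pairs counted by N(k,k,k,q-1).  Being e-free only depends
   on the primes dividing e, and Rad(q-1) = k p_1 ... p_s, so an element is
   (q-1)-free iff it is k-free and p_i-free for every i.  Hence N(q-1,...,q-1)
   counts the pairs of B satisfying the 3s conditions "a, b, ua+vb are
   p_i-free", while N(p_i k,k,k,q-1) etc. count the pairs of B satisfying one of
   them.  The sieve inequality |B /\ C_1 /\ ... /\ C_m| >= sum |B /\ C_j| - (m-1)|B|
   gives the first bound, and theta(p) = 1 - 1/p turns it into the second. *)

Lemma Rad_gt0 n : (0 < Rad n)%N.
Proof.
by rewrite /Rad big_seq prodn_cond_gt0 // => p; rewrite mem_primes => /and3P[/prime_gt0].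
Qed.

Lemma primes_Rad n : primes (Rad n) = primes n.
Proof.
apply/eq_primes => r; rewrite !mem_primes Rad_gt0 /Rad.
have [r_pr|] //= := boolP (prime r).
rewrite Euclid_dvd_prod // big_has; apply/hasP/andP => [[p] | [n_gt0 r_dvd]].
  rewrite mem_primes => /and3P[p_pr n_gt0 p_dvd]; rewrite dvdn_prime2 // => /eqP->.
  by split.
by exists r; rewrite ?mem_primes ?r_pr ?n_gt0.
Qed.

Section Efree.
Context {F : finFieldType}.
Implicit Types (a : F) (m n : nat).

Lemma efreeP n a : (0 < n)%N ->
  efree n a <-> a != 0 /\ forall r b, prime r -> (r %| n)%N -> a != b ^+ r.
Proof.
move=> n_gt0; split=> [[a_neq0 free_a] | [a_neq0 no_root]].
  split=> // r b r_pr r_dvd; apply/eqP => /(free_a r b r_dvd) r1.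
  by rewrite r1 in r_pr.
split=> // d b d_dvd a_eq.
have [d_lt1 | d_gt1 | //] := ltngtP d 1.
  by case: d d_lt1 d_dvd {a_eq} => // _; rewrite dvd0n eqn0Ngt n_gt0.
have := no_root _ (b ^+ (d %/ pdiv d)) (pdiv_prime d_gt1) (dvdn_trans (pdiv_dvd d) d_dvd).
by rewrite -exprM divnK ?pdiv_dvd // -a_eq eqxx.
Qed.

Lemma efree_eq_primes m n a : (0 < m)%N -> (0 < n)%N -> primes m =i primes n ->
  efree m a <-> efree n a.
Proof.
move=> m_gt0 n_gt0 primes_mn.
have dvdE r : prime r -> (r %| m)%N = (r %| n)%N.
  by move=> r_pr; have := primes_mn r; rewrite !mem_primes r_pr m_gt0 n_gt0.
rewrite !efreeP //; split=> -[a_neq0 no_root]; split=> // r b r_pr.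
  by rewrite -dvdE //; apply: no_root.
by rewrite dvdE //; apply: no_root.
Qed.

Lemma efree_Rad n a : (0 < n)%N -> efree (Rad n) a <-> efree n a.
Proof. by move=> n_gt0; apply: efree_eq_primes; rewrite ?Rad_gt0 ?primes_Rad. Qed.

Lemma efreeM m n a : (0 < m)%N -> (0 < n)%N ->
  efree (m * n) a <-> efree m a /\ efree n a.
Proof.
move=> m_gt0 n_gt0; rewrite !efreeP ?muln_gt0 ?m_gt0 //.
split=> [[a_neq0 no_root] | [[a_neq0 no_root_m] [_ no_root_n]]].
  by split; split=> // r b r_pr r_dvd; apply: no_root; rewrite // Euclid_dvdM // r_dvd ?orbT.
split=> // r b r_pr; rewrite Euclid_dvdM // => /orP[]; [exact: no_root_m | exact: no_root_n].
Qed.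

Lemma asbool_efreeM m n a : (0 < m)%N -> (0 < n)%N ->
  `[< efree (m * n) a >] = `[< efree m a >] && `[< efree n a >].
Proof. by move=> m_gt0 n_gt0; rewrite -asbool_and; apply/asbool_equiv_eq/efreeM. Qed.

Lemma asbool_efree_prod k ps a : (0 < k)%N -> {in ps, forall p, 0 < p}%N ->
  `[< efree (k * \prod_(p <- ps) p) a >] = `[< efree k a >] && all (fun p => `[< efree p a >]) ps.
Proof.
elim: ps k => [|p ps IH] k k_gt0 ps_gt0; first by rewrite big_nil muln1 andbT.
have p_gt0 := ps_gt0 p (mem_head p ps).
rewrite big_cons mulnA IH ?muln_gt0 ?k_gt0 ?p_gt0 //=; last first.
  by move=> r r_in; apply: ps_gt0; rewrite in_cons r_in orbT.
by rewrite asbool_efreeM // andbA.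
Qed.

End Efree.

Lemma card_sieve (T : finType) (B : {set T}) (hs : seq (pred T)) :
  (#|B| + \sum_(h <- hs) #|[set x in B | h x]|
     <= #|[set x in B | all (fun h => h x) hs]| + size hs * #|B|)%N.
Proof.
elim: hs => [|h hs IH].
  by rewrite big_nil !addn0; apply/subset_leq_card/subsetP => x xB; rewrite inE xB.
rewrite big_cons /= mulSn.
set X := [set x in B | h x]; set Y := [set x in B | all (fun h => h x) hs] in IH *.
have -> : [set x in B | all (fun h => h x) (h :: hs)] = X :&: Y.
  by apply/setP => x; rewrite !inE /= andbACA andbb.
have XY_sub : (#|X :|: Y| <= #|B|)%N.
  by apply/subset_leq_card/subsetP => x; rewrite !inE => /orP[] /andP[].
by have := cardsUI X Y; lia.
Qed.

Lemma card_sieve3 (T : finType) (B : {set T}) (I : Type) (s : seq I) (h1 h2 h3 : I -> pred T) :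
  (#|B| + \sum_(i <- s) (#|[set x in B | h1 i x]| + #|[set x in B | h2 i x]|
                         + #|[set x in B | h3 i x]|)
     <= #|[set x in B | [&& all (fun i => h1 i x) s, all (fun i => h2 i x) s
                          & all (fun i => h3 i x) s]]| + 3 * size s * #|B|)%N.
Proof.
pose hs := [seq h1 i | i <- s] ++ [seq h2 i | i <- s] ++ [seq h3 i | i <- s].
have := card_sieve B hs.
have -> : [set x in B | all (fun h => h x) hs]
    = [set x in B | [&& all (fun i => h1 i x) s, all (fun i => h2 i x) s
                      & all (fun i => h3 i x) s]].
  by apply/eq_finset => x; rewrite !all_cat !all_map.
by rewrite !big_cat !big_map !size_cat !size_map !big_split /=; lia.
Qed.

Lemma theta_prime p : prime p -> theta p = 1 - p%:R^-1.
Proof.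
move=> p_pr; have p_gt0 := prime_gt0 p_pr.
by rewrite /theta totient_prime // -subn1 natrB // mulrBl divff ?mul1r ?pnatr_eq0 -?lt0n.
Qed.

Section Nset.
Context {F : finFieldType} (u v : F).

Definition Nset (e1 e2 e3 e4 : nat) : {set F * F} :=
  [set ab | [&& ab.1 != 0, ab.2 != 0,
      `[< efree e1 ab.1 >], `[< efree e2 ab.2 >],
      `[< efree e3 (u * ab.1 + v * ab.2) >] &
      `[< efree e4 (v * ab.1^-1 + u * ab.2^-1) >] ] ].

Lemma NcountE e1 e2 e3 e4 : Ncount u v e1 e2 e3 e4 = #|Nset e1 e2 e3 e4|.
Proof. by []. Qed.

Lemma Nset_mul1 m n e2 e3 e4 : (0 < m)%N -> (0 < n)%N ->
  Nset (m * n) e2 e3 e4 = [set ab in Nset n e2 e3 e4 | `[< efree m ab.1 >]].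
Proof.
move=> m_gt0 n_gt0; apply/setP => ab; rewrite !inE asbool_efreeM //.
by rewrite -!andbA; do !bool_congr.
Qed.

Lemma Nset_mul2 m n e1 e3 e4 : (0 < m)%N -> (0 < n)%N ->
  Nset e1 (m * n) e3 e4 = [set ab in Nset e1 n e3 e4 | `[< efree m ab.2 >]].
Proof.
move=> m_gt0 n_gt0; apply/setP => ab; rewrite !inE asbool_efreeM //.
by rewrite -!andbA; do !bool_congr.
Qed.

Lemma Nset_mul3 m n e1 e2 e4 : (0 < m)%N -> (0 < n)%N ->
  Nset e1 e2 (m * n) e4 = [set ab in Nset e1 e2 n e4 | `[< efree m (u * ab.1 + v * ab.2) >]].
Proof.
move=> m_gt0 n_gt0; apply/setP => ab; rewrite !inE asbool_efreeM //.
by rewrite -!andbA; do !bool_congr.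
Qed.

Lemma Nset_Rad n k ps e4 : (0 < n)%N -> all prime ps ->
    Rad n = (k * \prod_(p <- ps) p)%N ->
  Nset n n n e4 =
    [set ab in Nset k k k e4 | [&& all (fun p => `[< efree p ab.1 >]) ps,
                                   all (fun p => `[< efree p ab.2 >]) ps
                                 & all (fun p => `[< efree p (u * ab.1 + v * ab.2) >]) ps]].
Proof.
move=> n_gt0 ps_prime RadE.
have k_gt0 : (0 < k)%N by move: (Rad_gt0 n); rewrite RadE muln_gt0 => /andP[].
have efree_n a : `[< efree n a >] = `[< efree k a >] && all (fun p => `[< efree p a >]) ps.
  rewrite -(asbool_equiv_eq (efree_Rad a n_gt0)) RadE asbool_efree_prod //.
  by move=> p /(allP ps_prime)/prime_gt0.
apply/setP => ab; rewrite !inE !efree_n.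
case: (all (fun p => `[< efree p ab.1 >]) ps); case: (all (fun p => `[< efree p ab.2 >]) ps);
  case: (all (fun p => `[< efree p (u * ab.1 + v * ab.2) >]) ps);
  by rewrite ?andbT ?andbF ?andFb.
Qed.

Lemma Ncount_sieve n k ps e4 : (0 < n)%N -> all prime ps ->
    Rad n = (k * \prod_(p <- ps) p)%N ->
  (Ncount u v k k k e4
     + \sum_(p <- ps) (Ncount u v (p * k) k k e4 + Ncount u v k (p * k) k e4
                       + Ncount u v k k (p * k) e4)
   <= Ncount u v n n n e4 + 3 * size ps * Ncount u v k k k e4)%N.
Proof.
move=> n_gt0 ps_prime RadE.
have k_gt0 : (0 < k)%N by move: (Rad_gt0 n); rewrite RadE muln_gt0 => /andP[].
rewrite !NcountE (Nset_Rad _ n_gt0 ps_prime RadE).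
under eq_big_seq => p /(allP ps_prime)/prime_gt0 p_gt0.
  by rewrite !NcountE Nset_mul1 // Nset_mul2 // Nset_mul3 //; over.
exact: card_sieve3.
Qed.

End Nset.

Theorem lemma5p2 (F : finFieldType) (u v : F) (k : nat) (ps : seq nat) :
  u != 0 -> v != 0 ->
  uniq ps -> all prime ps ->
  Rad #|F|.-1 = (k * \prod_(p <- ps) p)%N ->
  let q1 := #|F|.-1 in
  let Nq := (Ncount u v q1 q1 q1 q1)%:R : rat in
  let Nk := (Ncount u v k k k q1)%:R : rat in
  let s := size ps in
  (\sum_(p <- ps) ((Ncount u v (p * k) k k q1)%:R + (Ncount u v k (p * k) k q1)%:R
                   + (Ncount u v k k (p * k) q1)%:R)
     - (3 * s%:R - 1) * Nk <= Nq)
  /\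
  (\sum_(p <- ps) (((Ncount u v (p * k) k k q1)%:R - theta p * Nk)
                   + ((Ncount u v k (p * k) k q1)%:R - theta p * Nk)
                   + ((Ncount u v k k (p * k) q1)%:R - theta p * Nk))
     + (1 - 3 * \sum_(p <- ps) (p%:R)^-1) * Nk <= Nq).
Proof.
move=> _ _ _ ps_prime RadE q1 Nq Nk s.
have first_bound : \sum_(p <- ps) ((Ncount u v (p * k) k k q1)%:R
      + (Ncount u v k (p * k) k q1)%:R + (Ncount u v k k (p * k) q1)%:R)
    - (3 * s%:R - 1) * Nk <= Nq.
  have q1_gt0 : (0 < q1)%N by rewrite /q1 -subn1 subn_gt0 card_finNzRing_gt1.
  move: (Ncount_sieve u v q1 q1_gt0 ps_prime RadE); rewrite -(ler_nat rat) !natrD !natrM natr_sum.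
  under eq_bigr do rewrite !natrD.
  rewrite -/q1 -/Nq -/Nk; nra.
split=> //; apply: le_trans first_bound; rewrite le_eqVlt; apply/orP; left; apply/eqP.
have theta_sum : \sum_(p <- ps) theta p = s%:R - \sum_(p <- ps) p%:R^-1.
  rewrite (eq_big_seq (fun p => 1 - p%:R^-1)) => [|p /(allP ps_prime)/theta_prime//].
  by rewrite sumrB /s -sum1_size natr_sum.
rewrite !big_split /= !sumrN -!mulr_suml theta_sum; ring.
Qed.
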